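(* The following five definitions produce the same integer sequence, i.e. $a_n=b_n=c_n=d_n=e_n$ for all $n\ge 1$ (in particular each of these sequences is well defined): <ul> <li>$(a_n)_{n\ge1}$ is defined by $a_1=1$ and, for $n\ge 2$: $a_n=a_{n-1}+2$ if $n$ is in the sequence; $a_n=a_{n-1}+2$ if neither $n$ nor $n-1$ is in the sequence; $a_n=a_{n-1}+3$ if $n$ is not in the sequence but $n-1$ is in the sequence.</li> <li>$(b_n)_{n\ge1}$ is defined by $b_1=1$ and, for $n\ge 2$: $b_n=b_{n-1}+2$ if $n-1$ is not in the sequence; $b_n=b_{n-1}+3$ if $n-1$ is in the sequence.</li> <li>$c_n$ is the position of the $n$-th letter $0$ in the fixed point of the morphism $\phi$ on $\{0,1\}^*$ given by $\phi(0)=011$, $\phi(1)=01$.</li> <li>$d_n=\left\lfloor (1+\sqrt{2})\, n-\tfrac12\sqrt{2}\right\rfloor$ for $n\ge1$.</li> <li>$e_n=\lfloor r_n+\tfrac12\rfloor$, where $r_1=\tfrac{4}{\pi}$ and $r_{n+1}=\dfrac{n^2}{r_n-(2n-1)}$ for $n\ge1$.</li> </ul>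
   Context: In the definitions of $(a_n)$ and $(b_n)$, ''$m$ is in the sequence'' means that $m$ equals some term of that same sequence (the definitions are self-referential but determine the sequence recursively). The fixed point of $\phi$ is the infinite word $\lim_{k\to\infty}\phi^k(0)=0110101011010\cdots$ beginning with $0$; positions in this infinite word are numbered starting from $1$. *)

From Stdlib Require Import Reals ZArith Arith List.
Import ListNotations.
Open Scope R_scope.

Definition inseq (f : nat -> Z) (m : Z) : Prop :=
  exists k : nat, (1 <= k)%nat /\ f k = m.

Definition a_rec (f : nat -> Z) : Prop :=
  f 1%nat = 1%Z /\
  forall n : nat, (2 <= n)%nat ->
    let N := Z.of_nat n in
    (inseq f N -> f n = (f (n - 1)%nat + 2)%Z) /\
    (~ inseq f N /\ ~ inseq f (N - 1)%Z -> f n = (f (n - 1)%nat + 2)%Z) /\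
    (~ inseq f N /\ inseq f (N - 1)%Z -> f n = (f (n - 1)%nat + 3)%Z).

Definition b_rec (f : nat -> Z) : Prop :=
  f 1%nat = 1%Z /\
  forall n : nat, (2 <= n)%nat ->
    let N := Z.of_nat n in
    (~ inseq f (N - 1)%Z -> f n = (f (n - 1)%nat + 2)%Z) /\
    (inseq f (N - 1)%Z -> f n = (f (n - 1)%nat + 3)%Z).

Definition phi_letter (x : nat) : list nat :=
  match x with 0%nat => [0; 1; 1]%nat | _ => [0; 1]%nat end.
Definition phi (w : list nat) : list nat := flat_map phi_letter w.
Definition phik (k : nat) : list nat := Nat.iter k phi [0%nat].

Definition is_fixed_point_limit (w : nat -> nat) : Prop :=
  forall i : nat, (1 <= i)%nat ->
    exists K : nat, forall k : nat, (K <= k)%nat ->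
      (i <= length (phik k))%nat /\ nth (i - 1) (phik k) 0%nat = w i.

Definition nth_zero_pos (w : nat -> nat) (n p : nat) : Prop :=
  (1 <= p)%nat /\ w p = 0%nat /\
  length (filter (fun i => Nat.eqb (w i) 0) (seq 1 p)) = n.

Definition d (n : nat) : Z :=
  Int_part ((1 + sqrt 2) * INR n - sqrt 2 / 2).

(** r_1 = 4/pi, r_{n+1} = n^2 / (r_n - (2n - 1)); r 0 is an unused dummy. *)
Fixpoint r (n : nat) : R :=
  match n with
  | O => 0
  | S m =>
    match m with
    | O => 4 / PI
    | S _ => (INR m) ^ 2 / (r m - (2 * INR m - 1))
    end
  end.

Definition e (n : nat) : Z := Int_part (r n + 1 / 2).

(* Write t_m = sqrt 2 (m - 1/2); then d_n = n + floor t_n.  Since 1 < sqrt 2 < 3/2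
   the floor of t_m jumps by 1 or 2, and because (sqrt 2 - 1)(sqrt 2 + 1) = 1 the
   values of d are exactly the m at which it jumps by 2.  Hence d increases by 3
   after a value of d and by 2 otherwise, and no two consecutive integers are
   values of d: this is the content of recursions (a) and (b), which determine
   their solution because f k >= 2k - 1 makes membership of m <= n depend only on
   earlier terms.  The fixed point of phi is the word whose i-th letter is 0
   exactly when i is a value of d, phi sending its k-th letter onto positions
   d_k, ..., d_(k+1) - 1.
   For (e), r_n = y_(n-1) / y_n where y > 0 solves n^2 y_(n+1) + (2n - 1) y_n = y_(n-1)
   with y_1 / y_0 = pi / 4; y is given by integrals of powers of
   t^2 (1 - t^2) / (1 + t^2), and positivity yields r_n > 2n - 1.  The step
   v |-> 2n - 1 + n^2 / v of the recursion then contracts errors by a factor 4,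
   which pins r_n between (1 + sqrt 2)(n - 1/2) and that bound plus
   (sqrt 2 - 1) / (4n); adding 1/2 gives n + t_n plus a perturbation too small to
   reach the next integer, since 2 (floor t_n + 1)^2 - (2n - 1)^2 >= 1. *)

From Stdlib Require Import Reals Lra Lia ZArith Arith List Classical.
From Coquelicot Require Import Coquelicot.
Import ListNotations.
Open Scope R_scope.

(** * The floor of sqrt 2 (m - 1/2) and the sequence d *)

Lemma sqrt2_sq : sqrt 2 * sqrt 2 = 2.
Proof. apply sqrt_sqrt; lra. Qed.

Lemma sqrt2_bounds : 1.41 < sqrt 2 < 1.42.
Proof.
  pose proof sqrt2_sq; pose proof (sqrt_lt_R0 2 ltac:(lra)); split; nra.
Qed.

Definition tau (m : Z) : R := sqrt 2 * (IZR m - / 2).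
Definition floor_tau (m : Z) : Z := Int_part (tau m).
Definition dZ (k : Z) : Z := (k + floor_tau k)%Z.

Lemma odd_sq_neq_double_sq (m z : Z) : ((2 * m - 1) * (2 * m - 1) <> 2 * z * z)%Z.
Proof.
  intro E; apply (f_equal Z.odd) in E.
  replace (2 * m - 1)%Z with (2 * (m - 1) + 1)%Z in E by lia.
  rewrite <- Z.mul_assoc, Z.odd_mul, !Z.odd_add, !Z.odd_mul in E.
  now destruct (Z.odd (m - 1)).
Qed.

Lemma tau_not_integer (m z : Z) : tau m <> IZR z.
Proof.
  unfold tau; intro E.
  apply (odd_sq_neq_double_sq m z), eq_IZR.
  rewrite !mult_IZR, minus_IZR, mult_IZR, <- E; simpl IZR.
  replace (2 * _ * _) with (2 * (sqrt 2 * sqrt 2) * (IZR m - / 2) ^ 2) by ring.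
  rewrite sqrt2_sq; field.
Qed.

Lemma floor_tau_spec (m : Z) :
  IZR (floor_tau m) < tau m < IZR (floor_tau m) + 1.
Proof.
  unfold floor_tau; destruct (base_Int_part (tau m)) as [[Hlt | Heq] Hgt].
  - lra.
  - now destruct (tau_not_integer m (Int_part (tau m))).
Qed.

Lemma floor_tau_le_iff (m z : Z) : (floor_tau m <= z)%Z <-> tau m < IZR z + 1.
Proof.
  pose proof (floor_tau_spec m); split; intro Hle.
  - apply IZR_le in Hle; lra.
  - enough (Hlt : IZR (floor_tau m) < IZR (z + 1)) by (apply lt_IZR in Hlt; lia).
    rewrite plus_IZR; lra.
Qed.

Lemma le_floor_tau_iff (m z : Z) : (z <= floor_tau m)%Z <-> IZR z < tau m.
Proof.
  pose proof (floor_tau_spec m); split; intro Hle.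
  - apply IZR_le in Hle; lra.
  - enough (Hlt : IZR z < IZR (floor_tau m + 1)) by (apply lt_IZR in Hlt; lia).
    rewrite plus_IZR; lra.
Qed.

Lemma tau_add (m j : Z) : tau (m + j) = tau m + sqrt 2 * IZR j.
Proof. unfold tau; rewrite plus_IZR; ring. Qed.

Lemma floor_tau_1 : floor_tau 1 = 0%Z.
Proof.
  pose proof sqrt2_bounds; apply Z.le_antisymm.
  - apply floor_tau_le_iff; unfold tau; simpl IZR; lra.
  - apply le_floor_tau_iff; unfold tau; simpl IZR; lra.
Qed.

Lemma floor_tau_incr (m : Z) : (1 <= floor_tau (m + 1) - floor_tau m <= 2)%Z.
Proof.
  pose proof (floor_tau_spec m) as Hm; pose proof (floor_tau_spec (m + 1)) as Hm1.
  rewrite tau_add in Hm1; pose proof sqrt2_bounds; simpl IZR in Hm1.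
  assert (Hlo : IZR (floor_tau m) < IZR (floor_tau (m + 1))) by lra.
  assert (Hhi : IZR (floor_tau (m + 1)) < IZR (floor_tau m + 3)) by (rewrite plus_IZR; lra).
  apply lt_IZR in Hlo, Hhi; lia.
Qed.

Lemma floor_tau_incr2 (m : Z) : (floor_tau (m + 2) - floor_tau m <= 3)%Z.
Proof.
  pose proof (floor_tau_spec m) as Hm; pose proof (floor_tau_spec (m + 2)) as Hm2.
  rewrite tau_add in Hm2; pose proof sqrt2_bounds; simpl IZR in Hm2.
  assert (Hhi : IZR (floor_tau (m + 2)) < IZR (floor_tau m + 4)) by (rewrite plus_IZR; lra).
  apply lt_IZR in Hhi; lia.
Qed.

(* The Galois connection between [dZ] and [floor_tau]: both sides are linear
   inequalities in k and m whose defects differ by the factor sqrt 2 - 1 > 0. *)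
Lemma dZ_le_iff (k m : Z) : (dZ k <= m)%Z <-> (k + m <= floor_tau (m + 1))%Z.
Proof.
  unfold dZ.
  rewrite (Z.le_add_le_sub_l k), floor_tau_le_iff, le_floor_tau_iff.
  unfold tau; rewrite minus_IZR, !plus_IZR.
  set (a := IZR m - IZR k + 1 - sqrt 2 * (IZR k - / 2)).
  assert (E : sqrt 2 * (IZR m + 1 - / 2) - (IZR k + IZR m) - (sqrt 2 - 1) * a
              = (sqrt 2 * sqrt 2 - 2) * (IZR k - / 2)) by (unfold a; field).
  rewrite sqrt2_sq, Rminus_diag, Rmult_0_l in E.
  pose proof sqrt2_bounds; split; intro Hlt.
  - assert (0 < a) by (unfold a; lra); nra.
  - assert (0 < a) by (apply (Rmult_lt_reg_l (sqrt 2 - 1)); lra); unfold a in *; lra.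
Qed.

Lemma d_eq_dZ (n : nat) : d n = dZ (Z.of_nat n).
Proof.
  unfold d, dZ; symmetry; apply Int_part_spec.
  pose proof (floor_tau_spec (Z.of_nat n)); unfold tau in *.
  rewrite plus_IZR, <- INR_IZR_INZ in *; lra.
Qed.

Definition inD (m : Z) : Prop := exists k, (1 <= k)%Z /\ dZ k = m.

Lemma dZ_1 : dZ 1 = 1%Z.
Proof. unfold dZ; rewrite floor_tau_1; reflexivity. Qed.

Lemma dZ_succ (k : Z) : dZ (k + 1) = (dZ k + 1 + (floor_tau (k + 1) - floor_tau k))%Z.
Proof. unfold dZ; ring. Qed.

Lemma dZ_grows (j k : Z) : (j <= k)%Z -> (dZ j + 2 * (k - j) <= dZ k)%Z.
Proof.
  intro Hjk; replace k with (j + Z.of_nat (Z.to_nat (k - j)))%Z by lia.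
  induction (Z.to_nat (k - j)) as [| p IH]; [rewrite Z.add_0_r; lia |].
  rewrite Nat2Z.inj_succ, <- Z.add_1_r, Z.add_assoc, dZ_succ.
  pose proof (floor_tau_incr (j + Z.of_nat p)); lia.
Qed.

Lemma dZ_ge (k : Z) : (1 <= k)%Z -> (2 * k - 1 <= dZ k)%Z.
Proof. intro Hk; pose proof (dZ_grows 1 k Hk) as Hgrow; rewrite dZ_1 in Hgrow; lia. Qed.

Lemma not_inD_between (k m : Z) : (dZ k < m < dZ (k + 1))%Z -> ~ inD m.
Proof.
  intros Hm [j [_ <-]]; destruct (Z.le_gt_cases j k) as [Hjk | Hjk].
  - pose proof (dZ_grows j k Hjk); lia.
  - pose proof (dZ_grows (k + 1) j ltac:(lia)); lia.
Qed.

Lemma inD_iff_jump (m : Z) :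
  (1 <= m)%Z -> inD m <-> (floor_tau (m + 1) - floor_tau m = 2)%Z.
Proof.
  intro Hm; pose proof (floor_tau_incr m); split.
  - intros [k [_ Hk]].
    assert (Hle : (dZ k <= m)%Z) by lia.
    assert (Hgt : ~ (dZ k <= m - 1)%Z) by lia.
    rewrite dZ_le_iff in Hle, Hgt; rewrite Z.sub_add in Hgt; lia.
  - intro Hjump; exists (floor_tau (m + 1) - m)%Z.
    assert (Hle : (dZ (floor_tau (m + 1) - m) <= m)%Z) by (apply dZ_le_iff; lia).
    assert (Hgt : ~ (dZ (floor_tau (m + 1) - m) <= m - 1)%Z)
      by (rewrite dZ_le_iff, Z.sub_add; lia).
    enough (m + 1 <= floor_tau (m + 1))%Z by lia.
    apply le_floor_tau_iff; pose proof sqrt2_bounds; apply IZR_le in Hm.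
    unfold tau; rewrite plus_IZR; simpl IZR; nra.
Qed.

Lemma dZ_step (k : Z) : (1 <= k)%Z ->
  (inD k -> dZ (k + 1) = (dZ k + 3)%Z) /\ (~ inD k -> dZ (k + 1) = (dZ k + 2)%Z).
Proof.
  intro Hk; pose proof (floor_tau_incr k); rewrite (inD_iff_jump k Hk), dZ_succ.
  split; intro; lia.
Qed.

Lemma inD_not_succ (m : Z) : (1 <= m)%Z -> inD m -> ~ inD (m + 1).
Proof.
  intros Hm Hin Hin'; apply (inD_iff_jump m Hm) in Hin.
  apply (inD_iff_jump (m + 1) ltac:(lia)) in Hin'.
  pose proof (floor_tau_incr2 m); rewrite <- Z.add_assoc in Hin'; simpl in Hin'; lia.
Qed.

(** * Recursions (a) and (b) *)

Lemma inseq_d (m : Z) : inseq d m <-> inD m.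
Proof.
  split.
  - intros [k [Hk <-]]; exists (Z.of_nat k); rewrite <- d_eq_dZ; split; [lia | reflexivity].
  - intros [k [Hk <-]]; exists (Z.to_nat k).
    rewrite d_eq_dZ, Z2Nat.id by lia; split; [lia | reflexivity].
Qed.

Lemma d_ge (k : nat) : (1 <= k)%nat -> (2 * Z.of_nat k - 1 <= d k)%Z.
Proof. intro Hk; rewrite d_eq_dZ; apply dZ_ge; lia. Qed.

Lemma d_step (n : nat) : (2 <= n)%nat ->
  (inD (Z.of_nat n - 1) -> d n = (d (n - 1) + 3)%Z) /\
  (~ inD (Z.of_nat n - 1) -> d n = (d (n - 1) + 2)%Z).
Proof.
  intro Hn; rewrite !d_eq_dZ, Nat2Z.inj_sub by lia.
  pose proof (dZ_step (Z.of_nat n - 1) ltac:(lia)) as Hstep.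
  rewrite Z.sub_add in Hstep; exact Hstep.
Qed.

Lemma a_rec_d : a_rec d.
Proof.
  split; [rewrite d_eq_dZ; exact dZ_1 |].
  intros n Hn; cbv zeta; rewrite !inseq_d; destruct (d_step n Hn) as [D3 D2].
  split; [| split]; intros Hin.
  - apply D2; intro Hprev; apply (inD_not_succ (Z.of_nat n - 1) ltac:(lia) Hprev).
    now rewrite Z.sub_add.
  - apply D2, Hin.
  - apply D3, Hin.
Qed.

Lemma b_rec_d : b_rec d.
Proof.
  split; [rewrite d_eq_dZ; exact dZ_1 |].
  intros n Hn; cbv zeta; rewrite !inseq_d; destruct (d_step n Hn); split; assumption.
Qed.

Lemma inseq_ext (f g : nat -> Z) :
  (forall n, (1 <= n)%nat -> f n = g n) -> forall m, inseq f m <-> inseq g m.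
Proof.
  intros Hfg m; split; intros [k [Hk <-]]; exists k; split; auto; symmetry; auto.
Qed.

Lemma grows_by_two (f : nat -> Z) :
  f 1%nat = 1%Z -> (forall n, (2 <= n)%nat -> (f (n - 1)%nat + 2 <= f n)%Z) ->
  forall k, (1 <= k)%nat -> (2 * Z.of_nat k - 1 <= f k)%Z.
Proof.
  intros H1 Hstep k Hk; induction k as [| k IH]; [lia |].
  destruct (Nat.eq_dec k 0) as [-> | Hk0]; [rewrite H1; lia |].
  specialize (Hstep (S k) ltac:(lia)); rewrite Nat.sub_1_r in Hstep; simpl in Hstep.
  specialize (IH ltac:(lia)); lia.
Qed.

(* A value m <= n can only be taken at an index k <= (n + 1) / 2 < n, so the
   agreement of f with d below n already decides whether m is in f. *)
Lemma inseq_agree_below (f : nat -> Z) (n : nat) (m : Z) :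
  (forall k, (1 <= k)%nat -> (2 * Z.of_nat k - 1 <= f k)%Z) ->
  (forall k, (1 <= k < n)%nat -> f k = d k) -> (2 <= n)%nat -> (m <= Z.of_nat n)%Z ->
  inseq f m <-> inD m.
Proof.
  intros Hge Hagree Hn Hm; rewrite <- inseq_d; split.
  - intros [k [Hk <-]]; specialize (Hge k Hk).
    exists k; split; [exact Hk | symmetry; apply Hagree; lia].
  - intros [k [Hk <-]]; pose proof (d_ge k Hk).
    exists k; split; [exact Hk | apply Hagree; lia].
Qed.

Lemma eq_d_by_strong_induction (f : nat -> Z) :
  f 1%nat = 1%Z ->
  (forall n, (2 <= n)%nat -> (forall k, (1 <= k < n)%nat -> f k = d k) -> f n = d n) ->
  forall n, (1 <= n)%nat -> f n = d n.
Proof.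
  intros H1 Hstep n; induction n as [n IH] using lt_wf_ind; intro Hn.
  destruct (Nat.eq_dec n 1) as [-> | Hn1].
  - rewrite H1, d_eq_dZ; symmetry; exact dZ_1.
  - apply Hstep; [lia |]; intros k Hk; apply IH; lia.
Qed.

Lemma a_rec_unique (f : nat -> Z) : a_rec f -> forall n, (1 <= n)%nat -> f n = d n.
Proof.
  intros [H1 Hrec].
  assert (Hge : forall k, (1 <= k)%nat -> (2 * Z.of_nat k - 1 <= f k)%Z).
  { apply grows_by_two; [exact H1 |]; intros n Hn.
    destruct (Hrec n Hn) as [A [B C]]; cbv zeta in *.
    destruct (classic (inseq f (Z.of_nat n))); [rewrite A; auto; lia |].
    destruct (classic (inseq f (Z.of_nat n - 1))); [rewrite C | rewrite B]; auto; lia. }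
  apply eq_d_by_strong_induction; [exact H1 |]; intros n Hn Hagree.
  destruct (Hrec n Hn) as [A [B C]]; cbv zeta in *.
  rewrite (inseq_agree_below f n (Z.of_nat n)), (inseq_agree_below f n (Z.of_nat n - 1))
    in * by (auto; lia).
  destruct (d_step n Hn) as [D3 D2]; rewrite (Hagree (n - 1)%nat) in * by lia.
  destruct (classic (inD (Z.of_nat n - 1))) as [Hprev | Hprev].
  - rewrite C, D3; auto; split; [intro Hin | exact Hprev].
    apply (inD_not_succ (Z.of_nat n - 1) ltac:(lia) Hprev); now rewrite Z.sub_add.
  - rewrite D2 by auto; destruct (classic (inD (Z.of_nat n))); auto.
Qed.

Lemma b_rec_unique (f : nat -> Z) : b_rec f -> forall n, (1 <= n)%nat -> f n = d n.
Proof.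
  intros [H1 Hrec].
  assert (Hge : forall k, (1 <= k)%nat -> (2 * Z.of_nat k - 1 <= f k)%Z).
  { apply grows_by_two; [exact H1 |]; intros n Hn.
    destruct (Hrec n Hn) as [A B]; cbv zeta in *.
    destruct (classic (inseq f (Z.of_nat n - 1))); [rewrite B | rewrite A]; auto; lia. }
  apply eq_d_by_strong_induction; [exact H1 |]; intros n Hn Hagree.
  destruct (Hrec n Hn) as [A B]; cbv zeta in *.
  rewrite (inseq_agree_below f n (Z.of_nat n - 1)) in A, B by (auto; lia).
  destruct (d_step n Hn) as [D3 D2]; rewrite (Hagree (n - 1)%nat) in A, B by lia.
  destruct (classic (inD (Z.of_nat n - 1))); [rewrite B, D3 | rewrite A, D2]; auto.
Qed.

Lemma a_rec_iff (f : nat -> Z) : a_rec f <-> (forall n, (1 <= n)%nat -> f n = d n).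
Proof.
  split; [apply a_rec_unique |]; intro Hfd; destruct a_rec_d as [H1 Hrec].
  split; [rewrite Hfd; auto |]; intros n Hn; cbv zeta.
  rewrite !(inseq_ext f d Hfd), !Hfd by lia; apply Hrec, Hn.
Qed.

Lemma b_rec_iff (f : nat -> Z) : b_rec f <-> (forall n, (1 <= n)%nat -> f n = d n).
Proof.
  split; [apply b_rec_unique |]; intro Hfd; destruct b_rec_d as [H1 Hrec].
  split; [rewrite Hfd; auto |]; intros n Hn; cbv zeta.
  rewrite !(inseq_ext f d Hfd), !Hfd by lia; apply Hrec, Hn.
Qed.

(** * The fixed point of phi *)

Definition fixed_word (i : nat) : nat :=
  if Z.eqb (floor_tau (Z.of_nat i + 1) - floor_tau (Z.of_nat i)) 2 then 0%nat else 1%nat.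

Definition count_zeros (w : nat -> nat) (L : nat) : nat :=
  length (filter (fun i => Nat.eqb (w i) 0) (seq 1 L)).

Lemma fixed_word_inD (i : nat) : (1 <= i)%nat -> inD (Z.of_nat i) -> fixed_word i = 0%nat.
Proof.
  intros Hi Hin; apply inD_iff_jump in Hin; [| lia].
  unfold fixed_word; now rewrite Hin.
Qed.

Lemma fixed_word_not_inD (i : nat) : (1 <= i)%nat -> ~ inD (Z.of_nat i) -> fixed_word i = 1%nat.
Proof.
  intros Hi Hout; rewrite inD_iff_jump in Hout by lia.
  unfold fixed_word; now apply Z.eqb_neq in Hout as ->.
Qed.

Lemma count_zeros_fixed_word (L : nat) :
  Z.of_nat (count_zeros fixed_word L) = (floor_tau (Z.of_nat L + 1) - Z.of_nat L)%Z.
Proof.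
  induction L as [| L IH]; [simpl; rewrite floor_tau_1; reflexivity |].
  unfold count_zeros in *; rewrite seq_S, filter_app, length_app, Nat2Z.inj_add, IH.
  pose proof (floor_tau_incr (Z.of_nat L + 1)); simpl (1 + L)%nat; cbn [filter].
  unfold fixed_word; rewrite Nat2Z.inj_succ, <- Z.add_1_r.
  destruct (Z.eqb_spec (floor_tau (Z.of_nat L + 1 + 1) - floor_tau (Z.of_nat L + 1)) 2);
    simpl; lia.
Qed.

(* The image of the k-th letter occupies the positions d_k, ..., d_{k+1} - 1. *)
Lemma fixed_word_block (k P : nat) : (1 <= k)%nat -> Z.of_nat P = dZ (Z.of_nat k) ->
  map fixed_word (seq P (length (phi_letter (fixed_word k)))) = phi_letter (fixed_word k).
Proof.
  intros Hk HP; pose proof (dZ_ge (Z.of_nat k) ltac:(lia)).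
  assert (HP0 : fixed_word P = 0%nat)
    by (apply fixed_word_inD; [lia | rewrite HP; exists (Z.of_nat k); split; auto; lia]).
  assert (Hbetween : forall i, (dZ (Z.of_nat k) < Z.of_nat i < dZ (Z.of_nat k + 1))%Z ->
                     fixed_word i = 1%nat)
    by (intros i Hi; apply fixed_word_not_inD; [lia | exact (not_inD_between _ _ Hi)]).
  destruct (dZ_step (Z.of_nat k) ltac:(lia)) as [Hstep3 Hstep2].
  destruct (classic (inD (Z.of_nat k))) as [Hin | Hout].
  - rewrite (fixed_word_inD k Hk Hin); simpl.
    rewrite HP0, !Hbetween; [reflexivity | rewrite (Hstep3 Hin); lia ..].
  - rewrite (fixed_word_not_inD k Hk Hout); simpl.
    rewrite HP0, Hbetween; [reflexivity | rewrite (Hstep2 Hout); lia].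
Qed.

Lemma phi_app (u v : list nat) : phi (u ++ v) = phi u ++ phi v.
Proof. apply flat_map_app. Qed.

Lemma phi_fixed_word_prefix (L : nat) :
  phi (map fixed_word (seq 1 L)) = map fixed_word (seq 1 (2 * L + count_zeros fixed_word L)).
Proof.
  induction L as [| L IH]; [reflexivity |].
  rewrite seq_S, map_app, phi_app, IH.
  change (phi (map fixed_word [(1 + L)%nat])) with (phi_letter (fixed_word (S L)) ++ []).
  rewrite app_nil_r.
  assert (Hlen : (2 * S L + count_zeros fixed_word (S L) = 2 * L + count_zeros fixed_word L
                  + length (phi_letter (fixed_word (S L))))%nat).
  { unfold count_zeros; rewrite seq_S, filter_app, length_app; simpl.
    destruct (fixed_word (S L)); simpl; lia. }
  rewrite Hlen, (seq_app (2 * L + _)), map_app, (fixed_word_block (S L)); [reflexivity | lia |].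
  pose proof (count_zeros_fixed_word L); unfold dZ.
  replace (Z.of_nat (S L)) with (Z.of_nat L + 1)%Z by lia; lia.
Qed.

Lemma phik_prefix (k : nat) : exists N, (k < N)%nat /\ phik k = map fixed_word (seq 1 N).
Proof.
  induction k as [| k [N [HN IH]]].
  - exists 1%nat; split; [lia |]; simpl.
    rewrite (fixed_word_inD 1); [reflexivity | lia | exists 1%Z; split; [lia | exact dZ_1]].
  - exists (2 * N + count_zeros fixed_word N)%nat; split; [lia |].
    change (phik (S k)) with (phi (phik k)); rewrite IH; apply phi_fixed_word_prefix.
Qed.

Lemma nth_map_fixed_word (N i : nat) : (1 <= i <= N)%nat ->
  nth (i - 1) (map fixed_word (seq 1 N)) 0%nat = fixed_word i.
Proof.
  intro Hi; rewrite nth_indep with (d' := fixed_word 0) by (rewrite length_map, length_seq; lia).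
  rewrite map_nth, seq_nth by lia; f_equal; lia.
Qed.

Lemma fixed_word_is_limit : is_fixed_point_limit fixed_word.
Proof.
  intros i Hi; exists i; intros k Hik.
  destruct (phik_prefix k) as [M [HM ->]].
  rewrite length_map, length_seq, nth_map_fixed_word by lia; split; [lia | reflexivity].
Qed.

Lemma fixed_point_limit_unique (w : nat -> nat) :
  is_fixed_point_limit w -> forall i, (1 <= i)%nat -> w i = fixed_word i.
Proof.
  intros Hw i Hi; destruct (Hw i Hi) as [K HK].
  destruct (HK (Nat.max K i) ltac:(lia)) as [Hlen <-].
  destruct (phik_prefix (Nat.max K i)) as [N [HN Hk]].
  rewrite Hk in *; rewrite length_map, length_seq in Hlen.
  apply nth_map_fixed_word; lia.
Qed.

Lemma nth_zero_pos_fixed_word (n : nat) : (1 <= n)%nat ->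
  nth_zero_pos fixed_word n (Z.to_nat (dZ (Z.of_nat n))).
Proof.
  intro Hn; pose proof (dZ_ge (Z.of_nat n) ltac:(lia)).
  set (p := Z.to_nat (dZ (Z.of_nat n))).
  assert (Hp : Z.of_nat p = dZ (Z.of_nat n)) by (unfold p; lia).
  split; [lia | split].
  - apply fixed_word_inD; [lia | rewrite Hp; exists (Z.of_nat n); split; auto; lia].
  - fold (count_zeros fixed_word p); apply Nat2Z.inj; rewrite count_zeros_fixed_word.
    assert (Hle : (dZ (Z.of_nat n) <= Z.of_nat p)%Z) by lia.
    assert (Hgt : ~ (dZ (Z.of_nat n + 1) <= Z.of_nat p)%Z)
      by (pose proof (dZ_grows (Z.of_nat n) (Z.of_nat n + 1)); lia).
    rewrite dZ_le_iff in Hle, Hgt; lia.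
Qed.

Lemma nth_zero_pos_ext (w w' : nat -> nat) (n p : nat) :
  (forall i, (1 <= i)%nat -> w i = w' i) -> nth_zero_pos w' n p -> nth_zero_pos w n p.
Proof.
  intros Hww' [Hp [Hzero Hcount]]; split; [exact Hp | split; [rewrite Hww'; auto |]].
  rewrite <- Hcount; f_equal; apply filter_ext_in.
  intros i Hi; apply in_seq in Hi; rewrite Hww'; auto; lia.
Qed.

(** * An integral representation of r *)

Definition q (t : R) : R := (1 - t ^ 2) / (1 + t ^ 2).
Definition F_integrand (k : nat) (t : R) : R := (t ^ 2) ^ k * q t ^ k / (1 + t ^ 2).
Definition G_integrand (k : nat) (t : R) : R := t ^ 2 * F_integrand k t.
Definition F_int (k : nat) : R := RInt (F_integrand k) 0 1.
Definition G_int (k : nat) : R := RInt (G_integrand k) 0 1.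

Lemma one_plus_sq_pos (x : R) : 0 < 1 + x ^ 2.
Proof. nra. Qed.

Lemma is_derive_odd_pow (k : nat) (x : R) :
  is_derive (fun t => t * (t ^ 2) ^ k) x (INR (2 * k + 1) * (x ^ 2) ^ k).
Proof.
  apply is_derive_ext with (f := fun t => t ^ S (2 * k)).
  { intro t; change (t ^ S (2 * k)) with (t * t ^ (2 * k)); rewrite pow_mult; reflexivity. }
  replace (INR (2 * k + 1) * (x ^ 2) ^ k) with (INR (S (2 * k)) * 1 * x ^ Nat.pred (S (2 * k)))
    by (change (Nat.pred (S (2 * k))) with (2 * k)%nat; rewrite pow_mult, Nat.add_1_r; ring).
  apply is_derive_pow; auto_derive; auto.
Qed.

Lemma is_derive_q_pow (k : nat) (x : R) :
  is_derive (fun t => q t ^ S k) x (INR (S k) * (-4 * x / (1 + x ^ 2) ^ 2) * q x ^ k).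
Proof.
  apply (is_derive_pow q (S k) x); pose proof (one_plus_sq_pos x).
  unfold q; auto_derive; [lra | field; lra].
Qed.

Lemma F_integrand_continuous (k : nat) (x : R) : continuous (F_integrand k) x.
Proof.
  apply (@ex_derive_continuous R_AbsRing R_NormedModule); pose proof (one_plus_sq_pos x).
  unfold F_integrand, q; auto_derive; lra.
Qed.

Lemma G_integrand_continuous (k : nat) (x : R) : continuous (G_integrand k) x.
Proof.
  apply (@ex_derive_continuous R_AbsRing R_NormedModule); pose proof (one_plus_sq_pos x).
  unfold G_integrand, F_integrand, q; auto_derive; lra.
Qed.

Lemma RInt_lin_comb3_derive (f1 f2 f3 h : R -> R) (c1 c2 c3 : R) :
  (forall x, 0 <= x <= 1 -> is_derive h x (c1 * f1 x + c2 * f2 x + c3 * f3 x)) ->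
  (forall x, continuous f1 x) -> (forall x, continuous f2 x) -> (forall x, continuous f3 x) ->
  c1 * RInt f1 0 1 + c2 * RInt f2 0 1 + c3 * RInt f3 0 1 = h 1 - h 0.
Proof.
  intros Hh C1 C2 C3.
  assert (Hint : forall f, (forall x, continuous f x) -> is_RInt f 0 1 (RInt f 0 1))
    by (intros f Cf; apply (@RInt_correct R_CompleteNormedModule),
          (@ex_RInt_continuous R_CompleteNormedModule); auto).
  transitivity (RInt (fun x => c1 * f1 x + c2 * f2 x + c3 * f3 x) 0 1).
  - symmetry; apply (@is_RInt_unique R_CompleteNormedModule).
    exact (is_RInt_plus _ _ _ _ _ _ (is_RInt_plus _ _ _ _ _ _
      (is_RInt_scal _ _ _ c1 _ (Hint _ C1)) (is_RInt_scal _ _ _ c2 _ (Hint _ C2)))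
      (is_RInt_scal _ _ _ c3 _ (Hint _ C3))).
  - apply (@is_RInt_unique R_CompleteNormedModule), (is_RInt_derive h).
    + intros x Hx; rewrite Rmin_left, Rmax_right in Hx by lra; auto.
    + intros x _; apply continuity_pt_filterlim.
      apply continuity_pt_plus; [apply continuity_pt_plus |];
        apply continuity_pt_scal, continuity_pt_filterlim; first [apply C1 | apply C2 | apply C3].
Qed.

Lemma F_int_0 : F_int 0 = PI / 4.
Proof.
  unfold F_int; rewrite <- atan_1.
  replace (atan 1) with (atan 1 - atan 0) by (rewrite atan_0; ring).
  replace (RInt (F_integrand 0) 0 1) with
    (1 * RInt (F_integrand 0) 0 1 + 0 * RInt (F_integrand 0) 0 1 + 0 * RInt (F_integrand 0) 0 1)
    by ring.
  apply RInt_lin_comb3_derive; auto using F_integrand_continuous.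
  intros x _; apply is_derive_Reals.
  replace (1 * F_integrand 0 x + 0 * F_integrand 0 x + 0 * F_integrand 0 x) with (/ (1 + x ^ 2))
    by (unfold F_integrand; simpl; field; pose proof (one_plus_sq_pos x); simpl in *; lra).
  apply derivable_pt_lim_atan.
Qed.

Lemma G_int_0_add_F_int_0 : G_int 0 + F_int 0 = 1.
Proof.
  unfold G_int, F_int.
  replace (RInt (G_integrand 0) 0 1 + RInt (F_integrand 0) 0 1) with
    (1 * RInt (G_integrand 0) 0 1 + 1 * RInt (F_integrand 0) 0 1 + 0 * RInt (F_integrand 0) 0 1)
    by ring.
  transitivity (1 - 0); [| ring].
  apply (RInt_lin_comb3_derive _ _ _ (fun t => t));
    auto using F_integrand_continuous, G_integrand_continuous.
  intros x _; replace (1 * G_integrand 0 x + 1 * F_integrand 0 x + 0 * F_integrand 0 x) with 1.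
  - auto_derive; auto.
  - unfold G_integrand, F_integrand; simpl; field.
    pose proof (one_plus_sq_pos x); simpl in *; lra.
Qed.

(* These two recurrences integrate the derivatives of t^(2k+1) q^(k+1) and
   t^(2k+3) q^(k+1) over [0, 1]; both vanish at the ends since q 1 = 0. *)
Lemma F_int_succ (k : nat) :
  INR (2 * k + 2) * F_int (S k) - INR (2 * k + 1) * F_int k + INR (4 * k + 3) * G_int k = 0.
Proof.
  unfold F_int, G_int; set (h := fun t => - (t * (t ^ 2) ^ k * q t ^ S k)).
  transitivity (h 1 - h 0); [| unfold h, q; simpl; field].
  replace (_ - _ + _) with (INR (2 * k + 2) * RInt (F_integrand (S k)) 0 1
    + - INR (2 * k + 1) * RInt (F_integrand k) 0 1 + INR (4 * k + 3) * RInt (G_integrand k) 0 1)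
    by ring.
  apply RInt_lin_comb3_derive; auto using F_integrand_continuous, G_integrand_continuous.
  intros x _; unfold h.
  pose proof (is_derive_mult _ _ x _ _ (is_derive_odd_pow k x) (is_derive_q_pow k x)
                (fun a b => Rmult_comm a b)) as Hd.
  replace (_ + _ + _) with (- (INR (2 * k + 1) * (x ^ 2) ^ k * q x ^ S k
    + x * (x ^ 2) ^ k * (INR (S k) * (-4 * x / (1 + x ^ 2) ^ 2) * q x ^ k))).
  - exact (is_derive_opp _ _ _ Hd).
  - unfold G_integrand, F_integrand; simpl pow; generalize ((x * (x * 1)) ^ k); intro A.
    unfold q; rewrite !plus_INR, !mult_INR, !S_INR; simpl INR; field.
    pose proof (one_plus_sq_pos x); simpl in *; lra.
Qed.

Lemma G_int_succ (k : nat) :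
  INR (2 * k + 3) * G_int (S k) + INR (4 * k + 5) * F_int (S k) - INR (2 * k + 2) * G_int k = 0.
Proof.
  unfold F_int, G_int; set (h := fun t => t * (t ^ 2) ^ S k * q t ^ S k).
  transitivity (h 1 - h 0); [| unfold h, q; simpl; field].
  replace (_ + _ - _) with (INR (2 * k + 3) * RInt (G_integrand (S k)) 0 1
    + INR (4 * k + 5) * RInt (F_integrand (S k)) 0 1 + - INR (2 * k + 2) * RInt (G_integrand k) 0 1)
    by ring.
  apply RInt_lin_comb3_derive; auto using F_integrand_continuous, G_integrand_continuous.
  intros x _; unfold h.
  pose proof (is_derive_mult _ _ x _ _ (is_derive_odd_pow (S k) x) (is_derive_q_pow k x)
                (fun a b => Rmult_comm a b)) as Hd.
  replace (_ + _ + _) with (INR (2 * S k + 1) * (x ^ 2) ^ S k * q x ^ S k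
    + x * (x ^ 2) ^ S k * (INR (S k) * (-4 * x / (1 + x ^ 2) ^ 2) * q x ^ k)).
  - exact Hd.
  - unfold G_integrand, F_integrand; simpl pow; generalize ((x * (x * 1)) ^ k); intro A.
    unfold q; rewrite !plus_INR, !mult_INR, !S_INR; simpl INR; field.
    pose proof (one_plus_sq_pos x); simpl in *; lra.
Qed.

Lemma F_integrand_pos (k : nat) (x : R) : 0 < x < 1 -> 0 < F_integrand k x.
Proof.
  intro Hx; pose proof (one_plus_sq_pos x); unfold F_integrand, q.
  apply Rdiv_lt_0_compat; [| lra].
  apply Rmult_lt_0_compat; apply pow_lt; [nra | apply Rdiv_lt_0_compat; nra].
Qed.

Lemma F_int_pos (k : nat) : 0 < F_int k.
Proof.
  apply RInt_gt_0; [lra | apply F_integrand_pos | intros; apply F_integrand_continuous].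
Qed.

Lemma G_int_pos (k : nat) : 0 < G_int k.
Proof.
  apply RInt_gt_0; [lra | | intros; apply G_integrand_continuous].
  intros x Hx; unfold G_integrand; apply Rmult_lt_0_compat; [nra | apply F_integrand_pos, Hx].
Qed.

Definition y (n : nat) : R :=
  match n with
  | O => 1
  | S m => (if Nat.even m then F_int (Nat.div2 m) else G_int (Nat.div2 m)) / INR (fact m)
  end.

Lemma y_odd (k : nat) : y (S (2 * k)) = F_int k / INR (fact (2 * k)).
Proof. unfold y; rewrite Nat.even_mul, Nat.div2_double; reflexivity. Qed.

Lemma y_even (k : nat) : y (S (S (2 * k))) = G_int k / INR (fact (S (2 * k))).
Proof.
  unfold y; rewrite Nat.even_succ, Nat.odd_mul, Nat.div2_succ_double; reflexivity.
Qed.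

Lemma y_pos (n : nat) : 0 < y n.
Proof.
  destruct n as [| n]; [simpl; lra |].
  pose proof (lt_0_INR _ (lt_O_fact n)); unfold y.
  destruct (Nat.even n); apply Rdiv_lt_0_compat; auto using F_int_pos, G_int_pos.
Qed.

Lemma y_rec_even (k : nat) :
  INR (2 * S k) ^ 2 * y (S (2 * S k))
  = y (S (2 * k)) - (2 * INR (2 * S k) - 1) * y (S (S (2 * k))).
Proof.
  rewrite !y_odd, y_even; pose proof (F_int_succ k) as Hrec.
  replace (2 * S k)%nat with (S (S (2 * k))) by lia.
  pose proof (lt_0_INR _ (lt_O_fact (2 * k))); pose proof (pos_INR k).
  rewrite !fact_simpl, !mult_INR, !S_INR, mult_INR in *; rewrite !plus_INR, !mult_INR in Hrec.
  simpl INR in *.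
  replace (F_int (S k))
    with (((2 * INR k + 1) * F_int k - (4 * INR k + 3) * G_int k) / (2 * INR k + 2))
    by (field_simplify_eq; lra).
  field; lra.
Qed.

Lemma y_rec_odd (k : nat) :
  INR (S (2 * S k)) ^ 2 * y (S (S (2 * S k)))
  = y (S (S (2 * k))) - (2 * INR (S (2 * S k)) - 1) * y (S (2 * S k)).
Proof.
  rewrite !y_even, y_odd; pose proof (G_int_succ k) as Hrec.
  replace (2 * S k)%nat with (S (S (2 * k))) by lia.
  pose proof (lt_0_INR _ (lt_O_fact (2 * k))); pose proof (pos_INR k).
  rewrite !fact_simpl, !mult_INR, !S_INR, mult_INR in *; rewrite !plus_INR, !mult_INR in Hrec.
  simpl INR in *.
  replace (G_int (S k))
    with (((2 * INR k + 2) * G_int k - (4 * INR k + 5) * F_int (S k)) / (2 * INR k + 3))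
    by (field_simplify_eq; lra).
  field; lra.
Qed.

Lemma y_rec (n : nat) : (1 <= n)%nat ->
  INR n ^ 2 * y (S n) = y (n - 1) - (2 * INR n - 1) * y n.
Proof.
  intro Hn; destruct (Nat.Even_or_Odd n) as [[k ->] | [k ->]].
  - destruct k as [| k]; [lia |].
    replace (2 * S k - 1)%nat with (S (2 * k)) by lia.
    rewrite y_rec_even; replace (S (S (2 * k))) with (2 * S k)%nat by lia; reflexivity.
  - destruct k as [| k].
    + simpl; pose proof G_int_0_add_F_int_0; lra.
    + replace (2 * S k + 1)%nat with (S (2 * S k)) by lia.
      replace (S (2 * S k) - 1)%nat with (S (S (2 * k))) by lia.
      apply y_rec_odd.
Qed.

Lemma r_succ (n : nat) : (1 <= n)%nat -> r (S n) = INR n ^ 2 / (r n - (2 * INR n - 1)).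
Proof. intro Hn; destruct n as [| n]; [lia | reflexivity]. Qed.

Lemma r_eq_y_ratio (n : nat) : (1 <= n)%nat -> r n = y (n - 1) / y n.
Proof.
  induction n as [| n IH]; intro Hn; [lia |].
  destruct (Nat.eq_dec n 0) as [-> | Hn0].
  - change (r 1) with (4 / PI); change (y (1 - 1)) with 1; change (y 1) with (y (S (2 * 0))).
    rewrite y_odd, F_int_0; simpl.
    field; apply PI_neq0.
  - rewrite r_succ, IH by lia; replace (S n - 1)%nat with n by lia.
    pose proof (y_rec n ltac:(lia)) as Hrec; pose proof (y_pos n); pose proof (y_pos (S n)).
    assert (INR n <> 0) by (apply not_0_INR; lia).
    replace (y (n - 1) / y n - (2 * INR n - 1)) with (INR n ^ 2 * y (S n) / y n)
      by (rewrite Hrec; field; lra).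
    field; repeat split; lra.
Qed.

Lemma r_sub_odd_pos (n : nat) : (1 <= n)%nat -> 0 < r n - (2 * INR n - 1).
Proof.
  intro Hn; rewrite r_eq_y_ratio by exact Hn.
  replace (y (n - 1) / y n - (2 * INR n - 1)) with (INR n ^ 2 * y (S n) / y n)
    by (rewrite y_rec by exact Hn; field; apply Rgt_not_eq, y_pos).
  apply Rdiv_lt_0_compat; [apply Rmult_lt_0_compat; [apply pow_lt, lt_0_INR; lia |] |];
    apply y_pos.
Qed.

(** * Bracketing r *)

Definition alpha : R := 1 + sqrt 2.
Definition beta : R := sqrt 2 - 1.

Lemma alpha_mul_beta : alpha * beta = 1.
Proof. unfold alpha, beta; pose proof sqrt2_sq; nra. Qed.

Lemma beta_bounds : 0.41 < beta < 0.42.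
Proof. unfold beta; pose proof sqrt2_bounds; lra. Qed.

Lemma alpha_eq : alpha = 2 + beta.
Proof. unfold alpha, beta; ring. Qed.

(* The step v |-> 2x - 1 + x^2 / v of the recursion maps the interval
   [r_lower (x + 1), r_upper (x + 1)] into [r_lower x, r_upper x]: this is what
   r_lower_step and r_upper_step say. *)
Definition r_lower (x : R) : R := alpha * (x - / 2).
Definition r_upper (x : R) : R := r_lower x + beta / (4 * x).

Lemma r_lower_step (x : R) : 1 <= x ->
  beta * (x - / 2) * (r_upper (x + 1)) <= x ^ 2.
Proof.
  intro Hx; pose proof alpha_mul_beta; pose proof beta_bounds; unfold r_upper, r_lower.
  replace (beta * (x - / 2) * (alpha * (x + 1 - / 2) + beta / (4 * (x + 1)))) with
    (alpha * beta * ((x - / 2) * (x + / 2)) + beta * beta * (x - / 2) / (4 * (x + 1)))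
    by (field; lra).
  assert (beta * beta * (x - / 2) / (4 * (x + 1)) <= / 4).
  { apply Rmult_le_reg_r with (4 * (x + 1)); [lra |].
    unfold Rdiv; rewrite Rmult_assoc, Rinv_l by lra.
    assert (beta * beta < 1) by nra; nra. }
  nra.
Qed.

Lemma r_upper_step (x : R) : 1 <= x ->
  x ^ 2 <= (beta * (x - / 2) + beta / (4 * x)) * r_lower (x + 1).
Proof.
  intro Hx; unfold r_lower.
  replace ((beta * (x - / 2) + beta / (4 * x)) * (alpha * (x + 1 - / 2))) with
    (alpha * beta * ((x - / 2) * (x + / 2) + (x + / 2) / (4 * x))) by (field; lra).
  rewrite alpha_mul_beta.
  replace (1 * ((x - / 2) * (x + / 2) + (x + / 2) / (4 * x))) with (x ^ 2 + / (8 * x))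
    by (field; lra).
  assert (0 < / (8 * x)) by (apply Rinv_0_lt_compat; lra); lra.
Qed.

(* On v > 2x + 1 the map v |-> x^2 / v has slope less than 1/4 in size, so moving
   v by E moves x^2 / v by at most E / 4. *)
Lemma contraction_lower (x v U Z E : R) :
  0 <= Z -> 4 * Z <= 2 * x + 1 -> 2 * x + 1 < v -> Z * U <= x ^ 2 ->
  v <= U + E -> 0 <= E -> (Z - E / 4) * v <= x ^ 2.
Proof. intros; destruct (Rle_or_lt v U); nra. Qed.

Lemma contraction_upper (x v L W E : R) :
  0 <= W -> 4 * W <= 2 * x + 1 -> 2 * x + 1 < v -> x ^ 2 <= W * L ->
  L - E <= v -> 0 <= E -> x ^ 2 <= (W + E / 4) * v.
Proof. intros; destruct (Rle_or_lt L v); nra. Qed.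

Lemma recursion_step_bounds (x v E : R) :
  1 <= x -> 2 * x + 1 < v -> 0 <= E ->
  r_lower (x + 1) - E <= v <= r_upper (x + 1) + E ->
  r_lower x - E / 4 <= 2 * x - 1 + x ^ 2 / v <= r_upper x + E / 4.
Proof.
  intros Hx Hv HE [Hlo Hup]; pose proof beta_bounds.
  assert (Hb : 0 < beta / (4 * x)) by (apply Rdiv_lt_0_compat; lra).
  assert (Hb' : beta / (4 * x) <= beta / 4)
    by (unfold Rdiv; apply Rmult_le_compat_l; [lra | apply Rinv_le_contravar; lra]).
  assert (Hdiv : forall a b, a * v <= b -> a <= b / v).
  { intros a b Hab; apply Rmult_le_reg_r with v; [lra |].
    unfold Rdiv; rewrite Rmult_assoc, Rinv_l by lra; lra. }
  assert (Hdiv' : forall a b, b <= a * v -> b / v <= a).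
  { intros a b Hab; apply Rmult_le_reg_r with v; [lra |].
    unfold Rdiv; rewrite Rmult_assoc, Rinv_l by lra; lra. }
  pose proof (r_lower_step x Hx); pose proof (r_upper_step x Hx).
  assert (Hsplit : r_upper x = 2 * x - 1 + (beta * (x - / 2) + beta / (4 * x)) /\
                   r_lower x = 2 * x - 1 + beta * (x - / 2))
    by (unfold r_upper, r_lower; rewrite alpha_eq; split; field; lra).
  destruct Hsplit as [-> ->]; split.
  - enough (beta * (x - / 2) - E / 4 <= x ^ 2 / v) by lra.
    apply Hdiv, (contraction_lower x v (r_upper (x + 1))); nra.
  - enough (x ^ 2 / v <= beta * (x - / 2) + beta / (4 * x) + E / 4) by lra.
    apply Hdiv', (contraction_upper x v (r_lower (x + 1))); nra.
Qed.

Lemma r_recursion (n : nat) : (1 <= n)%nat -> r n = 2 * INR n - 1 + INR n ^ 2 / r (S n).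
Proof.
  intro Hn; rewrite r_succ by exact Hn; pose proof (r_sub_odd_pos n Hn).
  assert (INR n <> 0) by (apply not_0_INR; lia); field; split; auto; lra.
Qed.

Definition bracket_error (j : nat) (x : R) : R := (x + INR j) / 4 ^ j.

Lemma bracket_error_nonneg (j : nat) (x : R) : 0 <= x -> 0 <= bracket_error j x.
Proof.
  intro Hx; pose proof (pos_INR j); pose proof (pow_lt 4 j ltac:(lra)).
  unfold Rdiv; apply Rmult_le_pos; [lra | left; apply Rinv_0_lt_compat; lra].
Qed.

Lemma bracket_error_succ (j : nat) (x : R) :
  bracket_error (S j) x = bracket_error j (x + 1) / 4.
Proof.
  unfold bracket_error; rewrite S_INR; simpl pow.
  field; apply pow_nonzero; lra.
Qed.

Lemma r_bracket_approx (j : nat) : forall n, (1 <= n)%nat ->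
  r_lower (INR n) - bracket_error j (INR n) <= r n <= r_upper (INR n) + bracket_error j (INR n).
Proof.
  induction j as [| j IH]; intros n Hn.
  all: pose proof (r_sub_odd_pos n Hn); pose proof (r_sub_odd_pos (S n) ltac:(lia)) as Hv.
  all: assert (Hx : 1 <= INR n) by (apply (le_INR 1); lia).
  all: rewrite (r_recursion n Hn) in *; rewrite S_INR in Hv.
  - assert (Hq : INR n ^ 2 / r (S n) <= INR n / 2).
    { apply Rmult_le_reg_r with (r (S n)); [lra |].
      unfold Rdiv; rewrite Rmult_assoc, Rinv_l by lra; nra. }
    pose proof beta_bounds; assert (0 < beta / (4 * INR n)) by (apply Rdiv_lt_0_compat; lra).
    unfold bracket_error, r_upper, r_lower; rewrite alpha_eq.
    change (INR 0) with 0; change (4 ^ 0) with 1; nra.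
  - rewrite bracket_error_succ.
    apply recursion_step_bounds; [exact Hx | lra | apply bracket_error_nonneg; lra |].
    rewrite <- S_INR; apply IH; lia.
Qed.

Lemma bracket_error_le (j : nat) (x : R) : 1 <= x -> bracket_error j x <= (x + 1) / (INR j + 1).
Proof.
  intro Hx; unfold bracket_error; pose proof (pos_INR j).
  assert (Hpow : (INR j + 1) ^ 2 <= 4 ^ j).
  { induction j as [| j IHj]; [simpl; lra |].
    rewrite S_INR; simpl pow in *; pose proof (pos_INR j); nra. }
  apply Rmult_le_reg_r with (4 ^ j * (INR j + 1));
    [apply Rmult_lt_0_compat; [apply pow_lt |]; lra |].
  replace ((x + INR j) / 4 ^ j * (4 ^ j * (INR j + 1))) with ((x + INR j) * (INR j + 1))
    by (field; apply pow_nonzero; lra).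
  replace ((x + 1) / (INR j + 1) * (4 ^ j * (INR j + 1))) with ((x + 1) * 4 ^ j) by (field; lra).
  nra.
Qed.

Lemma r_bracket (n : nat) : (1 <= n)%nat -> r_lower (INR n) <= r n <= r_upper (INR n).
Proof.
  intro Hn; assert (Hx : 1 <= INR n) by (apply (le_INR 1); lia).
  assert (Hsmall : forall eps, 0 < eps -> exists j, bracket_error j (INR n) < eps).
  { intros eps Heps; destruct (INR_archimed eps (INR n + 1) Heps) as [j Hj].
    exists j; eapply Rle_lt_trans; [apply bracket_error_le, Hx |].
    pose proof (pos_INR j); apply Rmult_lt_reg_r with (INR j + 1); [lra |].
    unfold Rdiv; rewrite Rmult_assoc, Rinv_l by lra; nra. }
  split; apply Rnot_lt_le; intro Hlt.
  - destruct (Hsmall (r_lower (INR n) - r n) ltac:(lra)) as [j Hj].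
    pose proof (r_bracket_approx j n Hn); lra.
  - destruct (Hsmall (r n - r_upper (INR n)) ltac:(lra)) as [j Hj].
    pose proof (r_bracket_approx j n Hn); lra.
Qed.

(* 2 (floor_tau m + 1)^2 is an integer above (2m - 1)^2 = 2 (tau m)^2, hence
   above it by at least 1: tau m stays a little away from the next integer. *)
Lemma tau_sq_gap (m : Z) : (1 <= m)%Z -> tau m ^ 2 + / 2 <= (IZR (floor_tau m) + 1) ^ 2.
Proof.
  intro Hm; pose proof (floor_tau_spec m); pose proof sqrt2_bounds.
  assert (Htau : 2 * tau m ^ 2 = IZR ((2 * m - 1) * (2 * m - 1))).
  { unfold tau; rewrite mult_IZR, minus_IZR, mult_IZR; simpl IZR.
    replace (2 * (sqrt 2 * (IZR m - / 2)) ^ 2) with ((sqrt 2 * sqrt 2) * (2 * IZR m - 1) ^ 2 / 2)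
      by field.
    rewrite sqrt2_sq; field. }
  assert (Hpos : 0 < tau m) by (apply IZR_le in Hm; unfold tau; nra).
  assert (Hlt : IZR ((2 * m - 1) * (2 * m - 1)) < IZR (2 * (floor_tau m + 1) * (floor_tau m + 1)))
    by (rewrite <- Htau, !mult_IZR, plus_IZR; simpl IZR; nra).
  apply lt_IZR in Hlt.
  assert (Hle : IZR ((2 * m - 1) * (2 * m - 1) + 1)
                <= IZR (2 * (floor_tau m + 1) * (floor_tau m + 1)))
    by (apply IZR_le; lia).
  rewrite plus_IZR, <- Htau, !mult_IZR, plus_IZR in Hle; simpl IZR in Hle; lra.
Qed.

Lemma tau_add_beta_lt (n : nat) : (1 <= n)%nat ->
  tau (Z.of_nat n) + beta / (4 * INR n) < IZR (floor_tau (Z.of_nat n)) + 1.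
Proof.
  intro Hn; assert (Hx : 1 <= INR n) by (apply (le_INR 1); lia).
  pose proof (tau_sq_gap (Z.of_nat n) ltac:(lia)); pose proof (floor_tau_spec (Z.of_nat n)).
  pose proof sqrt2_bounds; pose proof beta_bounds.
  assert (Htau : tau (Z.of_nat n) = sqrt 2 * (INR n - / 2))
    by (unfold tau; rewrite <- INR_IZR_INZ; reflexivity).
  set (t := tau (Z.of_nat n)) in *; set (g := IZR (floor_tau (Z.of_nat n)) + 1) in *.
  assert (Ht : 0 < t <= 1.42 * INR n) by (rewrite Htau; nra).
  apply Rnot_le_lt; intro Hge.
  assert (Hgap : (g - t) * (4 * INR n) <= beta).
  { replace beta with (beta / (4 * INR n) * (4 * INR n)) by (field; lra).
    apply Rmult_le_compat_r; lra. }
  nra.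
Qed.

Lemma r_lower_add_half (n : nat) : r_lower (INR n) + / 2 = INR n + tau (Z.of_nat n).
Proof. unfold r_lower, alpha, tau; rewrite <- INR_IZR_INZ; field. Qed.

Lemma e_eq_d (n : nat) : (1 <= n)%nat -> e n = d n.
Proof.
  intro Hn; rewrite d_eq_dZ; unfold e, dZ; symmetry; apply Int_part_spec.
  destruct (r_bracket n Hn) as [Hlo Hup]; unfold r_upper in Hup.
  pose proof (r_lower_add_half n); pose proof (tau_add_beta_lt n Hn).
  pose proof (floor_tau_spec (Z.of_nat n)).
  rewrite plus_IZR, <- INR_IZR_INZ; lra.
Qed.

Theorem theorem1 :
  (forall f : nat -> Z, a_rec f <-> (forall n : nat, (1 <= n)%nat -> f n = d n)) /\
  (forall f : nat -> Z, b_rec f <-> (forall n : nat, (1 <= n)%nat -> f n = d n)) /\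
  (exists w : nat -> nat, is_fixed_point_limit w) /\
  (forall w : nat -> nat, is_fixed_point_limit w ->
     forall n : nat, (1 <= n)%nat ->
       exists p : nat, nth_zero_pos w n p /\ Z.of_nat p = d n) /\
  (forall n : nat, (1 <= n)%nat -> r n - (2 * INR n - 1) <> 0) /\
  (forall n : nat, (1 <= n)%nat -> e n = d n).
Proof.
  split; [exact a_rec_iff |]; split; [exact b_rec_iff |].
  split; [exists fixed_word; exact fixed_word_is_limit |].
  split; [| split; [intros n Hn; apply Rgt_not_eq, r_sub_odd_pos, Hn | exact e_eq_d]].
  intros w Hw n Hn; exists (Z.to_nat (d n)).
  pose proof (d_ge n Hn); rewrite Z2Nat.id by lia; split; [| reflexivity].
  apply (nth_zero_pos_ext w fixed_word); [exact (fixed_point_limit_unique w Hw) |].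
  rewrite d_eq_dZ; exact (nth_zero_pos_fixed_word n Hn).
Qed.
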